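(* Fix parameters $\mathfrak h=(h,\varepsilon,\theta)$. Let $\chi$ satisfy (OBS.1) and $f$ satisfy (RHS.2); if (RHS.2b) holds, assume moreover that condition (M.1) holds. Let $w_h,v_h\in\mathbb V_h$ satisfy $$\mathbb T_{\mathfrak h}[w_h;f,\chi](z)\le0\le\mathbb T_{\mathfrak h}[v_h;f,\chi](z)\qquad\forall z\in\mathcal N_h^I,$$ and $w_h(z)\le v_h(z)$ for all $z\in\mathcal N_h^b$. Then $w_h(z)\le v_h(z)$ for all $z\in\mathcal N_h$.
   Context: Setting: $\Omega\subset\mathbb R^d$ ($d\ge1$) is a bounded domain with continuous boundary. For $r>0$, $\Omega^{(r)}=\{x\in\Omega:\operatorname{dist}(x,\partial\Omega)>r\}$. $\mathcal T_h$ is a mesh of closed simplices, $h=\max_T\operatorname{diam}T$, $\Omega_h$ the interior of the union of the simplices, with $\Omega^{(h)}\subset\Omega_h\subset\Omega$; $\mathcal N_h$ is the set of vertices. $\mathbb V_h$ is the space of continuous piecewise linear functions on $\mathcal T_h$ with hat basis $\{\hat\varphi_z\}$ and Lagrange interpolant $\mathcal I_h$. Parameters $\mathfrak h=(h,\varepsilon,\theta)$ with $\varepsilon\in[h,\operatorname{diam}\Omega]$, $0<\theta\le1$. $\mathcal N_h^I=\mathcal N_h\cap\Omega^{(2\varepsilon)}$, $\mathcal N_h^b=\mathcal N_h\setminus\mathcal N_h^I$. $\mathbb S_\theta$ is a finite symmetric subset of the unit sphere $\mathbb S$ such that each $v\in\mathbb S$ has $v_\theta\in\mathbb S_\theta$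 with $|v-v_\theta|\le\theta$. For $z\in\mathcal N_h^I$, $\mathcal N_{\mathfrak h}(z)=\{z\}\cup\{z+\varepsilon v_\theta:v_\theta\in\mathbb S_\theta\}$ and $-\Delta^\diamond_{\infty,\mathfrak h}w(z)=\varepsilon^{-2}\big(2w(z)-\max_{x\in\mathcal N_{\mathfrak h}(z)}\mathcal I_hw(x)-\min_{x\in\mathcal N_{\mathfrak h}(z)}\mathcal I_hw(x)\big)$ for $w\in C(\overline\Omega)$. $\widetilde{\mathcal N}_{\mathfrak h}(z)=\{z\}\cup\{z'\in\mathcal N_h:\exists v_\theta\in\mathbb S_\theta,\ \hat\varphi_{z'}(z+\varepsilon v_\theta)>0\}$. (M.1): for every nonempty $S\subset\mathcal N_h^I$ there exist $z\in S$, $z'\in\mathcal N_h\setminus S$ with $z'\in\widetilde{\mathcal N}_{\mathfrak h}(z)$. (RHS.2): either (RHS.2a) $\sup_\Omega f<0$ or $\inf_\Omega f>0$, or (RHS.2b) $f\equiv0$. (OBS.1): $\chi\in C(\overline\Omega)$ and $\chi<g$ on $\partial\Omega$ for a given boundary datum $g\in C(\partial\Omega)$. Discrete obstacle operator: $\mathbb T_{\mathfrak h}[w;f,\chi](z)=\min\{-\Delta^\diamond_{\infty,\mathfrak h}w(z)-f(z),\,w(z)-\chi(z)\}$ for $z\in\mathcal N_h^I$. *)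

From HB Require Import structures.
From mathcomp Require Import all_boot all_order all_algebra.
From mathcomp Require Import all_classical all_reals all_analysis.
Set Implicit Arguments. Unset Strict Implicit. Unset Printing Implicit Defensive.
Import Order.TTheory GRing.Theory Num.Theory.
Import numFieldNormedType.Exports.
Local Open Scope classical_set_scope.
Local Open Scope ring_scope.

(* Points of R^d with d = n.+1 >= 1 are row vectors 'rV[R]_n.+1. *)
Section Defs.
Variables (R : realType) (n : nat).
Local Notation pt := 'rV[R]_n.+1.

Definition enorm (x : pt) : R := Num.sqrt (\sum_i x ord0 i ^+ 2).

Definition bdry (A : set pt) : set pt := closure A `\` interior A.

Definition dist_bdry (A : set pt) (x : pt) : R :=
  inf [set enorm (x - y) | y in bdry A].

Definition inner_set (A : set pt) (r : R) : set pt :=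
  [set x | A x /\ r < dist_bdry A x].

Definition set_diam (A : set pt) : R :=
  sup [set enorm (x - y) | x in A & y in A].

Definition bounded_pts (A : set pt) : Prop :=
  exists M : R, forall x, A x -> enorm x <= M.

(* continuous boundary: locally (after a rigid motion) the region below the
   graph of a continuous function of the first d-1 coordinates *)
Definition continuous_boundary (A : set pt) : Prop :=
  forall x0, bdry A x0 ->
  exists (r : R) (Q : 'M[R]_n.+1) (g : pt -> R),
    [/\ 0 < r, Q *m Q^T = 1%:M, continuous g,
     (forall y y' : pt, (forall i : 'I_n.+1, i != ord_max -> y ord0 i = y' ord0 i) ->
        g y = g y') &
     forall x, enorm (x - x0) < r ->
       (A x <-> ((x - x0) *m Q) ord0 ord_max < g ((x - x0) *m Q))].

Definition bounded_domain_cont_bdry (A : set pt) : Prop :=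
  [/\ A !=set0, open A, connected A, bounded_pts A & continuous_boundary A].

Definition simplex := {ffun 'I_n.+2 -> pt}.

Definition verts (K : simplex) : seq pt := [seq K i | i <- enum 'I_n.+2].

Definition aff_indep (K : simplex) : Prop :=
  forall l : 'I_n.+2 -> R, \sum_i l i = 0 -> \sum_i l i *: K i = 0 ->
    forall i, l i = 0.

Definition conv_seq (s : seq pt) : set pt :=
  [set x | exists l : pt -> R, [/\ forall p, 0 <= l p,
       \sum_(p <- undup s) l p = 1 & x = \sum_(p <- undup s) l p *: p]].

Definition csimplex (K : simplex) : set pt := conv_seq (verts K).

(* conforming mesh of nondegenerate closed simplices *)
Definition is_mesh (T : seq simplex) : Prop :=
  (forall K, K \in T -> aff_indep K) /\
  (forall K K', K \in T -> K' \in T ->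
     csimplex K `&` csimplex K' = conv_seq [seq p <- verts K | p \in verts K']).

Definition mesh_union (T : seq simplex) : set pt :=
  [set x | exists2 K, K \in T & csimplex K x].

Definition mesh_dom (T : seq simplex) : set pt := interior (mesh_union T).

Definition nodes (T : seq simplex) : seq pt := undup (flatten [seq verts K | K <- T]).

Definition meshsize (T : seq simplex) : R :=
  \big[Num.max/0]_(K <- T) set_diam (csimplex K).

(* V_h : functions affine on every simplex of T (single-valued, hence
   continuous piecewise linear on the closure of Omega_h) *)
Definition in_Vh (T : seq simplex) (w : pt -> R) : Prop :=
  forall K, K \in T -> exists (a : pt) (b : R),
    forall x, csimplex K x -> w x = \sum_i a ord0 i * x ord0 i + b.

Definition hat_basis (T : seq simplex) (phi : pt -> pt -> R) : Prop :=
  forall z, z \in nodes T ->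
    in_Vh T (phi z) /\ forall z', z' \in nodes T -> phi z z' = (z == z')%:R.

Definition interp (T : seq simplex) (phi : pt -> pt -> R) (w : pt -> R) (x : pt) : R :=
  \sum_(z <- nodes T) w z * phi z x.

Definition sphere_net (Sth : seq pt) (theta : R) : Prop :=
  [/\ forall v, v \in Sth -> enorm v = 1,
      forall v, v \in Sth -> - v \in Sth &
      forall v, enorm v = 1 -> exists2 vt, vt \in Sth & enorm (v - vt) <= theta].

Definition stencil (eps : R) (Sth : seq pt) (z : pt) : seq pt :=
  z :: [seq z + eps *: v | v <- Sth].

Definition neg_lap_inf (T : seq simplex) (phi : pt -> pt -> R) (eps : R)
    (Sth : seq pt) (w : pt -> R) (z : pt) : R :=
  eps ^-2 * (2 * w z
     - \big[Num.max/interp T phi w z]_(x <- stencil eps Sth z) interp T phi w x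
     - \big[Num.min/interp T phi w z]_(x <- stencil eps Sth z) interp T phi w x).

Definition obs_op (T : seq simplex) (phi : pt -> pt -> R) (eps : R) (Sth : seq pt)
    (f chi w : pt -> R) (z : pt) : R :=
  Num.min (neg_lap_inf T phi eps Sth w z - f z) (w z - chi z).

Definition interior_node (Om : set pt) (T : seq simplex) (eps : R) (z : pt) : Prop :=
  z \in nodes T /\ inner_set Om (2 * eps) z.
Definition boundary_node (Om : set pt) (T : seq simplex) (eps : R) (z : pt) : Prop :=
  z \in nodes T /\ ~ inner_set Om (2 * eps) z.

Definition cond_M1 (Om : set pt) (T : seq simplex) (phi : pt -> pt -> R) (eps : R)
    (Sth : seq pt) : Prop :=
  forall K : set pt, K !=set0 -> (forall z, K z -> interior_node Om T eps z) ->
  exists z z', [/\ K z, z' \in nodes T, ~ K z' &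
     (z' = z \/ exists2 vt, vt \in Sth & 0 < phi z' (z + eps *: vt))].

Definition rhs2a (Om : set pt) (f : pt -> R) : Prop :=
  sup [set f x | x in Om] < 0 \/ 0 < inf [set f x | x in Om].
Definition rhs2b (Om : set pt) (f : pt -> R) : Prop := forall x, Om x -> f x = 0.

Definition obs1 (Om : set pt) (chi g : pt -> R) : Prop :=
  [/\ {within closure Om, continuous chi}, {within bdry Om, continuous g} &
      forall x, bdry Om x -> chi x < g x].

End Defs.

From HB Require Import structures.
From mathcomp Require Import all_boot all_order all_algebra.
From mathcomp Require Import all_classical all_reals all_analysis.
From mathcomp Require Import ring lra.
Set Implicit Arguments. Unset Strict Implicit. Unset Printing Implicit Defensive.
Import Order.TTheory GRing.Theory Num.Theory.
Import numFieldNormedType.Exports.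
Local Open Scope classical_set_scope.
Local Open Scope ring_scope.

(* Suppose [w - v] attains a positive maximum [M] over the nodes, on the contact
   set [C].  Nodes of [C] are interior, and there [w > v >= chi], so the obstacle
   is inactive for [w] and [-D w <= f <= -D v] on [C].  Every stencil point lies
   in a simplex of the mesh, so the interpolant there is a convex combination of
   nodal values with the hat functions as weights.  Hence the stencil maximum and
   minimum of [w] exceed those of [v] by at most [M], and [-D w <= -D v] forces
   both gaps to equal [M]; a stencil point realising either extremum then has
   its hat support inside [C].  If [f < 0], at a node of [C] maximising [w] the
   stencil maximum of [w] must exceed [w], which a convex combination of values
   of [w] on [C] cannot do; [f > 0] is symmetric with the minimum of [v].  If
   [f = 0], the nodes of [C] maximising [v] are closed under stencil supports,
   which condition (M.1) rules out. *)

Section Extrema.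

Lemma big_selective (T : Type) (I : eqType) (op : T -> T -> T) (x0 : T)
    (F : I -> T) (s : seq I) :
  (forall x y, op x y = x \/ op x y = y) ->
  \big[op/x0]_(j <- s) F j = x0 \/ exists2 i, i \in s & \big[op/x0]_(j <- s) F j = F i.
Proof.
move=> sel; elim: s => [|h s IH]; first by left; rewrite big_nil.
rewrite big_cons; have [->|->] := sel (F h) (\big[op/x0]_(j <- s) F j).
  by right; exists h; rewrite ?mem_head.
by case: IH => [->|[i si ->]]; [left | right; exists i; rewrite // in_cons si orbT].
Qed.

Lemma big_selective_attained (T : Type) (I : eqType) (op : T -> T -> T)
    (F : I -> T) (a : I) (s : seq I) :
  (forall x y, op x y = x \/ op x y = y) ->
  exists2 i, i \in a :: s & \big[op/F a]_(j <- a :: s) F j = F i.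
Proof.
by move=> /(big_selective (F a) F (a :: s)) [->|//]; exists a; rewrite ?mem_head.
Qed.

Variable R : realType.

Lemma max_selective (x y : R) : Num.max x y = x \/ Num.max x y = y.
Proof. by rewrite maxEle; case: ifP; [right | left]. Qed.

Lemma min_selective (x y : R) : Num.min x y = x \/ Num.min x y = y.
Proof. by rewrite minEle; case: ifP; [left | right]. Qed.

Lemma seq_argmax (I : eqType) (F : I -> R) (s : seq I) (x0 : I) : x0 \in s ->
  exists2 x, x \in s & {in s, forall y, F y <= F x}.
Proof.
move=> x0s; have [x xs' E] := big_selective_attained F x0 s max_selective.
have xs : x \in s by move: xs'; rewrite in_cons => /predU1P[->|].
by exists x => // y ys; rewrite -E; apply: le_bigmax_seq; rewrite // in_cons ys orbT.
Qed.

Lemma seq_argmin (I : eqType) (F : I -> R) (s : seq I) (x0 : I) : x0 \in s ->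
  exists2 x, x \in s & {in s, forall y, F x <= F y}.
Proof.
move=> /(seq_argmax (fun x => - F x)) [x xs xmax].
by exists x => // y ys; rewrite -lerN2 xmax.
Qed.

End Extrema.

Section ConvexCombination.
Variables (R : realType) (I : eqType) (s : seq I) (c : I -> R).
Hypotheses (c_ge0 : {in s, forall i, 0 <= c i}) (c_sum1 : \sum_(i <- s) c i = 1).

Lemma convex_comb_le (G : I -> R) (K : R) :
  {in s, forall i, 0 < c i -> G i <= K} ->
  \sum_(i <- s) G i * c i <= K.
Proof.
move=> GK; rewrite -[leRHS]mul1r -c_sum1 mulr_suml big_seq [leRHS]big_seq.
apply: ler_sum => i si; have := c_ge0 si; rewrite le_eqVlt => /predU1P[<-|ci_gt0].
  by rewrite mulr0 mul0r.
by rewrite mulrC ler_wpM2l ?GK ?ltW.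
Qed.

Lemma convex_comb_ge (G : I -> R) (K : R) :
  {in s, forall i, 0 < c i -> K <= G i} ->
  K <= \sum_(i <- s) G i * c i.
Proof.
move=> GK; rewrite -lerN2 -sumrN; under eq_bigr => i _ do rewrite -mulNr.
by apply: convex_comb_le => i si ci_gt0; rewrite lerN2 GK.
Qed.

Lemma convex_comb_eq_support (G : I -> R) (K : R) :
  {in s, forall i, 0 < c i -> G i <= K} ->
  \sum_(i <- s) G i * c i = K -> {in s, forall i, 0 < c i -> G i = K}.
Proof.
move=> GK sumK i si ci_gt0.
have gap_ge0 : forall j, j \in s -> 0 <= (K - G j) * c j.
  move=> j sj; have := c_ge0 sj; rewrite le_eqVlt => /predU1P[<-|cj_gt0].
    by rewrite mulr0.
  by rewrite mulr_ge0 ?subr_ge0 ?GK ?ltW.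
have : \sum_(j <- s | j \in s) (K - G j) * c j == 0.
  rewrite -big_seq; under eq_bigr => j _ do rewrite mulrBl.
  by rewrite sumrB -mulr_sumr c_sum1 mulr1 sumK subrr.
rewrite psumr_eq0 // => /allP/(_ i si); rewrite si mulf_eq0 (gt_eqF ci_gt0).
by rewrite orbF subr_eq0 => /eqP.
Qed.

End ConvexCombination.

Section EuclideanNorm.
Variables (R : realType) (n : nat).
Implicit Types x y : 'rV[R]_n.+1.

Lemma cauchy_schwarz (k : nat) (a b : 'I_k -> R) :
  (\sum_i a i * b i) ^+ 2 <= (\sum_i a i ^+ 2) * (\sum_i b i ^+ 2).
Proof.
pose F i j := a i ^+ 2 * b j ^+ 2 - a i * b i * (a j * b j).
have lagrange : \sum_i \sum_j (a i * b j - a j * b i) ^+ 2 =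
    2 * ((\sum_i a i ^+ 2) * (\sum_i b i ^+ 2) - (\sum_i a i * b i) ^+ 2).
  have -> : \sum_i \sum_j (a i * b j - a j * b i) ^+ 2 =
      \sum_i \sum_j F i j + \sum_i \sum_j F j i.
    rewrite -big_split /=; apply: eq_bigr => i _.
    by rewrite -big_split; apply: eq_bigr => j _; rewrite /F /=; ring.
  have -> : (\sum_i a i ^+ 2) * (\sum_i b i ^+ 2) - (\sum_i a i * b i) ^+ 2 =
      \sum_i \sum_j F i j.
    rewrite expr2 !mulr_suml -sumrB; apply: eq_bigr => i _.
    by rewrite !mulr_sumr -sumrB; apply: eq_bigr => j _; rewrite /F; ring.
  by rewrite [X in _ + X]exchange_big /=; ring.
have : 0 <= \sum_i \sum_j (a i * b j - a j * b i) ^+ 2.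
  by apply: sumr_ge0 => i _; apply: sumr_ge0 => j _; exact: sqr_ge0.
by rewrite lagrange pmulr_rge0 // subr_ge0.
Qed.

Lemma enorm_ge0 x : 0 <= enorm x.
Proof. exact: sqrtr_ge0. Qed.

Lemma enormZ a x : enorm (a *: x) = `|a| * enorm x.
Proof.
rewrite /enorm; under eq_bigr => i _ do rewrite mxE exprMn.
by rewrite -mulr_sumr sqrtrM ?sqr_ge0 // sqrtr_sqr.
Qed.

Lemma enormN x : enorm (- x) = enorm x.
Proof. by rewrite -scaleN1r enormZ normrN normr1 mul1r. Qed.

Lemma ler_enormD x y : enorm (x + y) <= enorm x + enorm y.
Proof.
rewrite /enorm; set A := \sum_i x ord0 i ^+ 2; set B := \sum_i y ord0 i ^+ 2.
have A_ge0 : 0 <= A by apply: sumr_ge0 => i _; exact: sqr_ge0.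
have B_ge0 : 0 <= B by apply: sumr_ge0 => i _; exact: sqr_ge0.
have -> : \sum_i (x + y) ord0 i ^+ 2 = A + 2 * (\sum_i x ord0 i * y ord0 i) + B.
  rewrite mulr_sumr -!big_split; apply: eq_bigr => i _; rewrite mxE /=; ring.
have cs : \sum_i x ord0 i * y ord0 i <= Num.sqrt A * Num.sqrt B.
  rewrite -sqrtrM //.
  apply: le_trans (ler_norm _) _; rewrite -sqrtr_sqr ler_sqrt ?mulr_ge0 //.
  exact: cauchy_schwarz.
rewrite -(ger0_norm (addr_ge0 (sqrtr_ge0 A) (sqrtr_ge0 B))) -sqrtr_sqr.
by rewrite ler_sqrt ?sqr_ge0 // sqrrD !sqr_sqrtr //; lra.
Qed.

End EuclideanNorm.

Section DistanceToBoundary.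
Variables (R : realType) (n : nat).
Local Notation pt := 'rV[R]_n.+1.
Implicit Types (A : set pt) (x y u : pt).

Lemma dist_bdry_le A x y : bdry A y -> dist_bdry A x <= enorm (x - y).
Proof.
move=> Ay; apply: ge_inf; last by exists y.
by exists 0 => _ [y' _ <-]; exact: enorm_ge0.
Qed.

Lemma dist_bdry_lipschitz A x y : 0 < dist_bdry A x ->
  dist_bdry A x - enorm (x - y) <= dist_bdry A y.
Proof.
move=> dx_gt0; have [y0 y0A] : bdry A !=set0.
  apply/set0P/negP => /eqP A0.
  by move: dx_gt0; rewrite /dist_bdry A0 image_set0 inf0 ltxx.
apply: lb_le_inf; first by exists (enorm (y - y0)), y0.
move=> _ [z zA <-]; rewrite lerBlDl.
apply: le_trans (dist_bdry_le x zA) _.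
have -> : x - z = (x - y) + (y - z) by rewrite addrA subrK.
exact: ler_enormD.
Qed.

Lemma open_translate_mem A x u : open A -> A x -> enorm u < dist_bdry A x ->
  A (x + u).
Proof.
move=> oA Ax ux.
pose S := (fun t : R => x + t *: u) @` `[0, 1].
have S_conn : connected S.
  apply: connected_continuous_connected; first exact: segment_connected.
  apply: continuous_subspaceT => t.
  apply: (@continuousD R pt R (fun=> x) (fun t : R => t *: u) t).
    exact: cst_continuous.
  exact: scalel_continuous.
have SA : S `&` A = S.
  apply: S_conn.
  - exists x; split => //; exists 0; last by rewrite scale0r addr0.
    by rewrite /= in_itv /= lexx ler01.
  - by exists A.
  exists (closure A); first exact: closed_closure.
  apply/seteqP; split => y [Sy Ay]; split => //; first exact: subset_closure.
  apply: contrapT => nAy.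
  have Ay_bdry : bdry A y by split => // /interior_subset.
  case: Sy => t; rewrite /= in_itv /= => /andP[t_ge0 t_le1] yE.
  have := lt_le_trans ux (dist_bdry_le x Ay_bdry).
  rewrite -yE opprD addNKr enormN enormZ ger0_norm // ltNge.
  by rewrite ler_piMl ?enorm_ge0.
have : S (x + u) by exists 1; rewrite ?scale1r //= in_itv /= lexx ler01.
by rewrite -SA => -[].
Qed.

Lemma inner_set_translate A r x u : open A -> A x -> 0 <= r ->
  enorm u + r < dist_bdry A x -> inner_set A r (x + u).
Proof.
move=> oA Ax r_ge0 urx; split.
  by apply: open_translate_mem => //; apply: le_lt_trans urx; rewrite lerDl.
have dx_gt0 : 0 < dist_bdry A x.
  by apply: le_lt_trans urx; rewrite addr_ge0 ?enorm_ge0.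
apply: lt_le_trans (dist_bdry_lipschitz (x + u) dx_gt0).
by rewrite opprD addNKr enormN ltrBrDl.
Qed.

End DistanceToBoundary.

Lemma sum_delta (V : zmodType) (I : eqType) (s : seq I) (F : I -> V) p :
  uniq s -> p \in s -> \sum_(q <- s) F q *+ (q == p) = F p.
Proof.
move=> s_uniq ps; rewrite (bigD1_seq p) //= eqxx mulr1n big1 ?addr0 //.
by move=> q /negbTE->; rewrite mulr0n.
Qed.

Lemma sum_mul_delta (R : realType) (I : eqType) (s : seq I) (F : I -> R) p :
  uniq s -> p \in s -> \sum_(q <- s) F q * (q == p)%:R = F p.
Proof. by move=> s_uniq ps; under eq_bigr do rewrite mulr_natr; exact: sum_delta. Qed.

Section HatFunctions.
Variables (R : realType) (n : nat).
Local Notation pt := 'rV[R]_n.+1.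
Variables (T : seq (simplex R n)) (phi : pt -> pt -> R).
Hypothesis hat : hat_basis T phi.
Implicit Types (K : simplex R n) (g u : pt -> R).

Lemma mem_nodes K p : K \in T -> p \in verts K -> p \in nodes T.
Proof. by move=> KT pK; rewrite mem_undup; apply/flatten_mapP; exists K. Qed.

Lemma csimplex_vert K p : p \in verts K -> csimplex K p.
Proof.
move=> pK; have pK' : p \in undup (verts K) by rewrite mem_undup.
exists (fun q => (q == p)%:R); split; first by move=> q; rewrite ler0n.
  exact: (sum_delta (fun=> 1) (undup_uniq _) pK').
rewrite -[LHS](sum_delta id (undup_uniq _) pK').
by apply: eq_bigr => q _; rewrite scaler_nat.
Qed.

Lemma interp_node g z : z \in nodes T -> interp T phi g z = g z.
Proof.
move=> zT; rewrite -(sum_mul_delta g (undup_uniq _) zT).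
by apply: eq_big_seq => m mT; rewrite (proj2 (hat mT)).
Qed.

Lemma affine_conv_comb (a : pt) (b : R) (s : seq pt) (l : pt -> R) :
  \sum_(p <- s) l p = 1 ->
  \sum_i a ord0 i * (\sum_(p <- s) l p *: p) ord0 i + b =
    \sum_(p <- s) l p * (\sum_i a ord0 i * p ord0 i + b).
Proof.
move=> l_sum1; under [RHS]eq_bigr => p _ do rewrite mulrDr mulr_sumr.
rewrite big_split /= -mulr_suml l_sum1 mul1r exchange_big /=; congr (_ + _).
apply: eq_bigr => i _; rewrite summxE mulr_sumr.
by apply: eq_bigr => p _; rewrite mxE; ring.
Qed.

Lemma Vh_conv_comb u K (l : pt -> R) : in_Vh T u -> K \in T ->
  (forall p, 0 <= l p) -> \sum_(p <- undup (verts K)) l p = 1 ->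
  u (\sum_(p <- undup (verts K)) l p *: p) = \sum_(p <- undup (verts K)) l p * u p.
Proof.
move=> uVh KT l_ge0 l_sum1; have [a [b uK]] := uVh K KT.
rewrite uK; last by exists l.
rewrite affine_conv_comb //; apply: eq_big_seq => p; rewrite mem_undup => pK.
by rewrite uK //; exact: csimplex_vert.
Qed.

Definition convex_hat_weights (x : pt) : Prop :=
  {in nodes T, forall m, 0 <= phi m x} /\ \sum_(m <- nodes T) phi m x = 1.

Lemma node_convex_hat z : z \in nodes T -> convex_hat_weights z.
Proof.
move=> zT; split=> [m mT|]; first by rewrite (proj2 (hat mT) _ zT) ler0n.
rewrite -(sum_delta (fun=> 1) (undup_uniq _) zT).
by apply: eq_big_seq => m mT; rewrite (proj2 (hat mT) _ zT).
Qed.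

Lemma csimplex_convex_hat K x : K \in T -> csimplex K x -> convex_hat_weights x.
Proof.
move=> KT [l [l_ge0 l_sum1 ->]].
have phi_conv m : m \in nodes T -> phi m (\sum_(p <- undup (verts K)) l p *: p) =
    \sum_(p <- undup (verts K)) l p * (m == p)%:R.
  move=> mT; rewrite Vh_conv_comb //; last exact: (proj1 (hat mT)).
  apply: eq_big_seq => p; rewrite mem_undup => pK.
  by rewrite (proj2 (hat mT)) // (mem_nodes KT pK).
split=> [m mT|].
  by rewrite phi_conv // sumr_ge0 // => p _; rewrite mulr_ge0 ?ler0n.
rewrite (eq_big_seq _ phi_conv) exchange_big /= -[RHS]l_sum1.
apply: eq_big_seq => p; rewrite mem_undup => pK.
exact: (sum_mul_delta (fun=> l p) (undup_uniq _) (mem_nodes KT pK)).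
Qed.

End HatFunctions.

Lemma meshsize_ge0 (R : realType) (n : nat) (T : seq (simplex R n)) : 0 <= meshsize T.
Proof. exact: bigmax_ge_id. Qed.

Lemma stencil_convex_hat (R : realType) (n : nat) (Om : set 'rV[R]_n.+1)
    (T : seq (simplex R n)) (phi : 'rV[R]_n.+1 -> 'rV[R]_n.+1 -> R)
    (eps theta : R) (Sth : seq 'rV[R]_n.+1) (z x : 'rV[R]_n.+1) :
  open Om -> sphere_net Sth theta -> meshsize T <= eps ->
  inner_set Om (meshsize T) `<=` mesh_dom T -> hat_basis T phi ->
  interior_node Om T eps z -> x \in stencil eps Sth z -> convex_hat_weights T phi x.
Proof.
move=> oOm [Sth_unit _ _] h_le_eps inner_mesh hat [zT [Omz dz]].
rewrite in_cons => /predU1P[->|/mapP[vt vtS ->]]; first exact: node_convex_hat.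
have eps_ge0 : 0 <= eps := le_trans (meshsize_ge0 T) h_le_eps.
have : inner_set Om (meshsize T) (z + eps *: vt).
  apply: inner_set_translate => //; first exact: meshsize_ge0.
  rewrite enormZ Sth_unit // mulr1 ger0_norm //; apply: le_lt_trans dz; lra.
by move=> /inner_mesh /interior_subset [K KT Kx]; exact: csimplex_convex_hat KT Kx.
Qed.

Lemma rhs2a_sign (R : realType) (n : nat) (Om : set 'rV[R]_n.+1)
    (f : 'rV[R]_n.+1 -> R) :
  rhs2a Om f -> (forall y, Om y -> f y < 0) \/ (forall y, Om y -> 0 < f y).
Proof.
case=> [sup_lt0|inf_gt0]; [left | right] => y Omy.
  have fOm_sup : has_sup [set f x | x in Om].
    by apply: contrapT => /sup_out E; move: sup_lt0; rewrite E ltxx.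
  by apply: le_lt_trans sup_lt0; apply: sup_upper_bound => //; exists y.
have fOm_inf : has_inf [set f x | x in Om].
  by apply: contrapT => /inf_out E; move: inf_gt0; rewrite E ltxx.
by apply: lt_le_trans inf_gt0 _; apply: (ge_inf fOm_inf.2); exists y.
Qed.

Lemma cond_M1_eps0 (R : realType) (n : nat) (Om : set 'rV[R]_n.+1)
    (T : seq (simplex R n)) (phi : 'rV[R]_n.+1 -> 'rV[R]_n.+1 -> R)
    (Sth : seq 'rV[R]_n.+1) (z : 'rV[R]_n.+1) :
  hat_basis T phi -> cond_M1 Om T phi 0 Sth -> ~ interior_node Om T 0 z.
Proof.
move=> hat M1 z_int.
have [||y [q [/= yz qT qz]]] := M1 [set z]; [by exists z | by move=> y /= -> |].
rewrite yz; case=> [//|[vt _]]; rewrite scale0r addr0 (proj2 (hat q qT) _ z_int.1).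
by move/eqP: qz => /negbTE->; rewrite ltxx.
Qed.

Section DiscreteComparison.
Variables (R : realType) (n : nat).
Local Notation pt := 'rV[R]_n.+1.
Variables (Om : set pt) (T : seq (simplex R n)) (phi : pt -> pt -> R).
Variables (eps : R) (Sth : seq pt) (f chi w v : pt -> R) (M : R).
Hypothesis hat : hat_basis T phi.
Hypothesis eps_ge0 : 0 <= eps.
Hypothesis stencil_convex : forall z x, interior_node Om T eps z ->
  x \in stencil eps Sth z -> convex_hat_weights T phi x.
Hypothesis sub_super : forall z, interior_node Om T eps z ->
  obs_op T phi eps Sth f chi w z <= 0 /\ 0 <= obs_op T phi eps Sth f chi v z.
Hypothesis M_gt0 : 0 < M.
Hypothesis diff_le : {in nodes T, forall p, w p - v p <= M}.
Hypothesis diff_eq_interior :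
  {in nodes T, forall p, w p - v p = M -> interior_node Om T eps p}.

Local Notation I := (interp T phi).
Local Notation L := (neg_lap_inf T phi eps Sth).
Local Notation smax g z :=
  (\big[Num.max/interp T phi g z]_(x <- stencil eps Sth z) interp T phi g x).
Local Notation smin g z :=
  (\big[Num.min/interp T phi g z]_(x <- stencil eps Sth z) interp T phi g x).

Definition contact_set : seq pt := [seq p <- nodes T | w p - v p == M].

Lemma mem_contact_set p :
  (p \in contact_set) = (p \in nodes T) && (w p - v p == M).
Proof. by rewrite mem_filter andbC. Qed.

Lemma contact_setP p : p \in contact_set -> p \in nodes T /\ w p - v p = M.
Proof. by rewrite mem_contact_set => /andP[pT /eqP]. Qed.

Lemma contact_set_interior p : p \in contact_set -> interior_node Om T eps p.
Proof. by move=> /contact_setP[pT pM]; exact: diff_eq_interior. Qed.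

Lemma contact_lap p : p \in contact_set -> L w p <= f p /\ f p <= L v p.
Proof.
move=> pC; have [_ pM] := contact_setP pC.
have := M_gt0; rewrite -pM subr_gt0 => vw.
have [] := sub_super (contact_set_interior pC).
rewrite /obs_op ge_min le_min => /orP[Lw|wchi] /andP[Lv vchi]; split; lra.
Qed.

Lemma interp_diff_le x : convex_hat_weights T phi x -> I w x - I v x <= M.
Proof.
move=> [phi_ge0 phi_sum1]; rewrite /interp -sumrB.
under eq_bigr do rewrite -mulrBl.
by apply: convex_comb_le => // m mT _; exact: diff_le.
Qed.

Lemma interp_diff_eq_support x : convex_hat_weights T phi x -> I w x - I v x = M ->
  {in nodes T, forall m, 0 < phi m x -> m \in contact_set}.
Proof.
move=> [phi_ge0 phi_sum1]; rewrite /interp -sumrB.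
under eq_bigr do rewrite -mulrBl.
move=> /(convex_comb_eq_support phi_ge0 phi_sum1) supp m mT phi_gt0.
by rewrite mem_contact_set mT supp ?eqxx // => q qT _; exact: diff_le.
Qed.

Section PositiveStencilRadius.
Hypothesis eps_gt0 : 0 < eps.

Lemma contact_stencil_shift p : p \in contact_set ->
  smax w p = smax v p + M /\ smin w p = smin v p + M.
Proof.
move=> pC; have [_ pM] := contact_setP pC.
have shift x : x \in stencil eps Sth p -> I w x <= I v x + M.
  move=> xs; rewrite -lerBlDl.
  exact/interp_diff_le/(stencil_convex (contact_set_interior pC) xs).
have ps : p \in stencil eps Sth p := mem_head _ _.
have max_le : smax w p <= smax v p + M.
  rewrite [leLHS]big_seq; apply: bigmax_le => [|x xs].
    by apply: (le_trans (shift _ ps)); rewrite lerD2r bigmax_ge_id.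
  by apply: (le_trans (shift _ xs)); rewrite lerD2r le_bigmax_seq.
have min_le : smin w p <= smin v p + M.
  rewrite -lerBlDr [leRHS]big_seq; apply: le_bigmin => [|x xs]; rewrite lerBlDr.
    by apply: (@le_trans _ _ (I w p)); [exact: bigmin_le_id | exact: shift].
  by apply: (@le_trans _ _ (I w x)); [exact: ge_bigmin_seq | exact: shift].
(* Each shift is at most [M], and [L w p <= L v p] forces their sum to be [2 M]. *)
have [Lw Lv] := contact_lap pC.
have := le_trans Lw Lv; rewrite ler_pM2l ?invr_gt0 ?exprn_gt0 // => Lwv.
split; lra.
Qed.


Lemma contact_stencil_argmax p : p \in contact_set ->
  exists2 x, x \in stencil eps Sth p & I w x = smax w p /\ I w x - I v x = M.
Proof.
move=> pC; have [x xs xE] : exists2 x, x \in stencil eps Sth p & smax w p = I w x.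
  exact: (big_selective_attained (I w) p _ (@max_selective R)).
have [shift_max _] := contact_stencil_shift pC.
have := interp_diff_le (stencil_convex (contact_set_interior pC) xs).
have : I v x <= smax v p by rewrite le_bigmax_seq.
by exists x => //; split; lra.
Qed.

Lemma contact_stencil_argmin p : p \in contact_set ->
  exists2 x, x \in stencil eps Sth p & I v x = smin v p /\ I w x - I v x = M.
Proof.
move=> pC; have [x xs xE] : exists2 x, x \in stencil eps Sth p & smin v p = I v x.
  exact: (big_selective_attained (I v) p _ (@min_selective R)).
have [_ shift_min] := contact_stencil_shift pC.
have := interp_diff_le (stencil_convex (contact_set_interior pC) xs).
have : smin w p <= I w x by rewrite ge_bigmin_seq.
by exists x => //; split; lra.
Qed.

Lemma contact_set0_f_lt0 p0 : {in contact_set, forall p, f p < 0} ->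
  p0 \notin contact_set.
Proof.
move=> f_lt0; apply/negP => /(seq_argmax w) [z zC zmax].
have [x xs [xmax xshift]] := contact_stencil_argmax zC.
have [Lw _] := contact_lap zC.
have := le_lt_trans Lw (f_lt0 _ zC); rewrite pmulr_rlt0 ?invr_gt0 ?exprn_gt0 // => Xw.
have : smin w z <= w z.
  by rewrite -(interp_node hat w (contact_setP zC).1) bigmin_le_id.
have [phi_ge0 phi_sum1] := stencil_convex (contact_set_interior zC) xs.
have : I w x <= w z.
  rewrite /interp; apply: convex_comb_le => // m mT phi_gt0.
  exact/zmax/(interp_diff_eq_support (conj phi_ge0 phi_sum1) xshift mT).
lra.
Qed.

Lemma contact_set0_f_gt0 p0 : {in contact_set, forall p, 0 < f p} ->
  p0 \notin contact_set.
Proof.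
move=> f_gt0; apply/negP => /(seq_argmin v) [z zC zmin].
have [x xs [xmin xshift]] := contact_stencil_argmin zC.
have [_ Lv] := contact_lap zC.
have := lt_le_trans (f_gt0 _ zC) Lv; rewrite pmulr_rgt0 ?invr_gt0 ?exprn_gt0 // => Xv.
have : v z <= smax v z.
  by rewrite -[leLHS](interp_node hat v (contact_setP zC).1) bigmax_ge_id.
have [phi_ge0 phi_sum1] := stencil_convex (contact_set_interior zC) xs.
have : v z <= I v x.
  rewrite /interp; apply: convex_comb_ge => // m mT phi_gt0.
  exact/zmin/(interp_diff_eq_support (conj phi_ge0 phi_sum1) xshift mT).
lra.
Qed.

Lemma contact_top_stencil p x : {in contact_set, forall q, f q = 0} ->
  p \in contact_set -> {in contact_set, forall q, v q <= v p} ->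
  x \in stencil eps Sth p ->
  {in nodes T, forall m, 0 < phi m x -> m \in contact_set /\ v m = v p}.
Proof.
move=> f0 pC pmax xs; have [pT pM] := contact_setP pC.
have x_conv := stencil_convex (contact_set_interior pC) xs.
have [xw xws [xwmax xwshift]] := contact_stencil_argmax pC.
have [smax_shift smin_shift] := contact_stencil_shift pC.
have Xw : 2 * w p - smax w p - smin w p <= 0.
  have [Lw _] := contact_lap pC.
  by move: Lw; rewrite f0 // pmulr_rle0 ?invr_gt0 ?exprn_gt0.
have vxw : I v xw <= v p.
  have [phi_ge0 phi_sum1] := stencil_convex (contact_set_interior pC) xws.
  rewrite /interp; apply: convex_comb_le => // m mT phi_gt0.
  exact/pmax/(interp_diff_eq_support (conj phi_ge0 phi_sum1) xwshift mT).
have vp_le : v p <= smax v p by rewrite -[leLHS](interp_node hat v pT) bigmax_ge_id.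
have smin_le : smin w p <= I w x by rewrite ge_bigmin_seq.
have vx_le : I v x <= smax v p by rewrite le_bigmax_seq.
have x_le := interp_diff_le x_conv.
(* [v] is maximal at [p] over the stencil, so [L w p <= 0] lifts every stencil
   value of [w] to [w p]. *)
have [xshift vx] : I w x - I v x = M /\ I v x = v p by split; lra.
have [phi_ge0 phi_sum1] := x_conv.
have supp := interp_diff_eq_support x_conv xshift.
move=> m mT phi_gt0; split; first exact: supp.
apply: (convex_comb_eq_support phi_ge0 phi_sum1 (G := v)) => // q qT phi_q_gt0.
exact/pmax/supp.
Qed.

Lemma contact_set0_f_eq0 p0 : {in contact_set, forall p, f p = 0} ->
  cond_M1 Om T phi eps Sth -> p0 \notin contact_set.
Proof.
move=> f0 M1; apply/negP => /(seq_argmax v) [zt ztC ztmax].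
have [||z [z' [[zC vz] z'T z'top zz']]] :=
  M1 [set p | p \in contact_set /\ v p = v zt].
- by exists zt.
- by move=> p [pC _]; exact: contact_set_interior.
apply: z'top; case: zz' => [->//|[vt vtS phi_gt0]].
have zmax : {in contact_set, forall q, v q <= v z} by rewrite vz.
have zs : z + eps *: vt \in stencil eps Sth z.
  by rewrite in_cons (map_f (fun u => z + eps *: u)) ?orbT.
have [z'C vz'] := contact_top_stencil f0 zC zmax zs z'T phi_gt0.
by split; rewrite // vz'.
Qed.

End PositiveStencilRadius.

Lemma contact_set_nil : rhs2a Om f \/ rhs2b Om f ->
  (rhs2b Om f -> cond_M1 Om T phi eps Sth) -> contact_set = [::].
Proof.
move=> rhs M1; case E: contact_set => [//|p0 s]; exfalso.
have p0C : p0 \in contact_set by rewrite E mem_head.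
have Om_contact q : q \in contact_set -> Om q.
  by move=> /contact_set_interior[_ []].
have [eps_gt0|eps_le0] := ltP 0 eps.
  case: rhs => [/rhs2a_sign[f_lt0|f_gt0]|f0].
  - by move: p0C; apply/negP; apply: contact_set0_f_lt0 => // q /Om_contact/f_lt0.
  - by move: p0C; apply/negP; apply: contact_set0_f_gt0 => // q /Om_contact/f_gt0.
  - move: p0C; apply/negP; apply: contact_set0_f_eq0 => //; last exact: M1.
    by move=> q /Om_contact/f0.
have eps0 : eps = 0 by apply/le_anti; rewrite eps_le0 eps_ge0.
(* With [eps = 0] the factor [eps^-2] is [0^-1 = 0], so both operators vanish. *)
case: rhs => [/rhs2a_sign f_sign|f0].
  have [] := contact_lap p0C; rewrite /neg_lap_inf eps0 expr0n invr0 !mul0r.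
  by case: f_sign => f_sign; have := f_sign p0 (Om_contact p0 p0C); lra.
have := contact_set_interior p0C; have := M1 f0; rewrite eps0.
exact: cond_M1_eps0 hat.
Qed.

End DiscreteComparison.

Theorem theorem5p5 (R : realType) (n : nat) (Om : set 'rV[R]_n.+1)
    (T : seq (simplex R n)) (phi : 'rV[R]_n.+1 -> 'rV[R]_n.+1 -> R)
    (eps theta : R) (Sth : seq 'rV[R]_n.+1)
    (f chi g w v : 'rV[R]_n.+1 -> R) :
  bounded_domain_cont_bdry Om ->
  is_mesh T ->
  inner_set Om (meshsize T) `<=` mesh_dom T ->
  mesh_dom T `<=` Om ->
  hat_basis T phi ->
  meshsize T <= eps -> eps <= set_diam Om ->
  0 < theta -> theta <= 1 -> sphere_net Sth theta ->
  obs1 Om chi g ->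
  (rhs2a Om f \/ rhs2b Om f) ->
  (rhs2b Om f -> cond_M1 Om T phi eps Sth) ->
  in_Vh T w -> in_Vh T v ->
  (forall z, interior_node Om T eps z ->
     obs_op T phi eps Sth f chi w z <= 0 /\ 0 <= obs_op T phi eps Sth f chi v z) ->
  (forall z, boundary_node Om T eps z -> w z <= v z) ->
  forall z, z \in nodes T -> w z <= v z.
Proof.
move=> [_ oOm _ _ _] _ inner_mesh _ hat h_le_eps _ _ _ Sth_net _ rhs M1 _ _.
move=> sub_super bdry_le z zT; rewrite leNgt; apply/negP => vz_lt_wz.
have [p pT pmax] := seq_argmax (fun q => w q - v q) zT.
have M_gt0 : 0 < w p - v p by apply: lt_le_trans (pmax z zT); rewrite subr_gt0.
have diff_eq_interior : {in nodes T, forall q,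
    w q - v q = w p - v p -> interior_node Om T eps q}.
  move=> q qT qM; split=> //; apply: contrapT => q_bdry.
  by have := bdry_le q (conj qT q_bdry); rewrite -subr_le0 qM leNgt M_gt0.
have stencil_convex z' x : interior_node Om T eps z' ->
    x \in stencil eps Sth z' -> convex_hat_weights T phi x.
  exact: stencil_convex_hat oOm Sth_net h_le_eps inner_mesh hat.
have eps_ge0 := le_trans (meshsize_ge0 T) h_le_eps.
have : p \in contact_set T w v (w p - v p) by rewrite mem_contact_set pT eqxx.
by rewrite (contact_set_nil hat eps_ge0 stencil_convex sub_super M_gt0 pmax
  diff_eq_interior rhs M1).
Qed.
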